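(* Let $t$ be a term of the distributive $\lambda$-calculus. If $t$ is closed (has no free variables) and is a normal form for $\to_{\mathsf{dist}}$, then $t$ is a value, i.e. $t$ is a variable, an abstraction $\lambda x.s$, or a pair $\langle s,u\rangle$.
   Context: Terms of the distributive $\lambda$-calculus are given by the grammar $t,s,u ::= x \mid \lambda x.t \mid ts \mid \langle t,s\rangle \mid \pi_1 t \mid \pi_2 t$, considered up to $\alpha$-renaming; $t\{x:=s\}$ denotes capture-avoiding substitution. The top-level rules are: $(\lambda x.t)s \mapsto_\beta t\{x:=s\}$; $\pi_i\langle t_1,t_2\rangle \mapsto_{\pi_i} t_i$ for $i=1,2$; $\langle t,s\rangle u \mapsto_{@_\times} \langle tu, su\rangle$; $\pi_i(\lambda x.t)\mapsto_{\pi_\lambda} \lambda x.\pi_i t$ for $i=1,2$. The relation $\to_{\mathsf{dist}}$ is the closure of the union of these rules under all term constructors (i.e. a rule may be applied to any subterm). A normal form is a term with no $\to_{\mathsf{dist}}$-reduct. *)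

(* Terms of the distributive lambda-calculus, with binders
   represented by de Bruijn indices (alpha-equivalence classes). *)
From Stdlib Require Import Arith.

Inductive term : Type :=
| Var : nat -> term
| Lam : term -> term          (* lambda x. t  (x is index 0 in t) *)
| App : term -> term -> term
| Pair : term -> term -> term
| Pi1 : term -> term
| Pi2 : term -> term.

Fixpoint lift (c : nat) (t : term) : term :=
  match t with
  | Var n => if n <? c then Var n else Var (S n)
  | Lam t => Lam (lift (S c) t)
  | App t s => App (lift c t) (lift c s)
  | Pair t s => Pair (lift c t) (lift c s)
  | Pi1 t => Pi1 (lift c t)
  | Pi2 t => Pi2 (lift c t)
  end.

(* subst k s t : capture-avoiding substitution of s for index k in t,
   decrementing the indices above k (the binder is removed). *)
Fixpoint subst (k : nat) (s : term) (t : term) : term :=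
  match t with
  | Var n => if n <? k then Var n
             else if n =? k then s
             else Var (pred n)
  | Lam t => Lam (subst (S k) (lift 0 s) t)
  | App t1 t2 => App (subst k s t1) (subst k s t2)
  | Pair t1 t2 => Pair (subst k s t1) (subst k s t2)
  | Pi1 t => Pi1 (subst k s t)
  | Pi2 t => Pi2 (subst k s t)
  end.

Definition subst0 (t s : term) : term := subst 0 s t.

Inductive top_step : term -> term -> Prop :=
| ts_beta : forall t s, top_step (App (Lam t) s) (subst0 t s)
| ts_pi1 : forall t1 t2, top_step (Pi1 (Pair t1 t2)) t1
| ts_pi2 : forall t1 t2, top_step (Pi2 (Pair t1 t2)) t2
| ts_app_pair : forall t s u, top_step (App (Pair t s) u) (Pair (App t u) (App s u))
| ts_pi1_lam : forall t, top_step (Pi1 (Lam t)) (Lam (Pi1 t))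
| ts_pi2_lam : forall t, top_step (Pi2 (Lam t)) (Lam (Pi2 t)).

Inductive dist_step : term -> term -> Prop :=
| ds_top : forall t u, top_step t u -> dist_step t u
| ds_lam : forall t t', dist_step t t' -> dist_step (Lam t) (Lam t')
| ds_appl : forall t t' s, dist_step t t' -> dist_step (App t s) (App t' s)
| ds_appr : forall t s s', dist_step s s' -> dist_step (App t s) (App t s')
| ds_pairl : forall t t' s, dist_step t t' -> dist_step (Pair t s) (Pair t' s)
| ds_pairr : forall t s s', dist_step s s' -> dist_step (Pair t s) (Pair t s')
| ds_pi1 : forall t t', dist_step t t' -> dist_step (Pi1 t) (Pi1 t')
| ds_pi2 : forall t t', dist_step t t' -> dist_step (Pi2 t) (Pi2 t').

Definition normal_form (t : term) : Prop := forall u, ~ dist_step t u.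

Fixpoint closed_at (k : nat) (t : term) : Prop :=
  match t with
  | Var n => n < k
  | Lam t => closed_at (S k) t
  | App t s | Pair t s => closed_at k t /\ closed_at k s
  | Pi1 t | Pi2 t => closed_at k t
  end.

Definition closed (t : term) : Prop := closed_at 0 t.

Definition is_value (t : term) : Prop :=
  (exists x, t = Var x) \/ (exists s, t = Lam s) \/ (exists s u, t = Pair s u).

(* A normal form that is not a value is an application or projection whose
   principal argument is again a normal form.  Following these eliminations
   down to the head, the head cannot be an abstraction or a pair (that would
   be a β, π or @× / πλ redex), so it is a variable; and since the head is
   never under a binder, that variable is free in the whole term. *)
From Stdlib Require Import Arith Lia.

Fixpoint head (t : term) : term :=
  match t with
  | App t _ | Pi1 t | Pi2 t => head t
  | _ => t
  end.

Lemma closed_at_head (k : nat) (t : term) : closed_at k t -> closed_at k (head t).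
Proof.
  induction t; simpl; intuition.
Qed.

Lemma normal_form_appl (t s : term) : normal_form (App t s) -> normal_form t.
Proof.
  intros Hn u Hs. apply (Hn (App u s)). now constructor.
Qed.

Lemma normal_form_pi1 (t : term) : normal_form (Pi1 t) -> normal_form t.
Proof.
  intros Hn u Hs. apply (Hn (Pi1 u)). now constructor.
Qed.

Lemma normal_form_pi2 (t : term) : normal_form (Pi2 t) -> normal_form t.
Proof.
  intros Hn u Hs. apply (Hn (Pi2 u)). now constructor.
Qed.

Lemma normal_form_value_or_head_var (t : term) :
  normal_form t -> is_value t \/ exists n, head t = Var n.
Proof.
  unfold is_value.
  induction t as [n|t _|t1 IH1 t2 _|t1 _ t2 _|t IH|t IH]; intros Hn; simpl.
  - left; eauto.
  - left; eauto.
  - right.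
    destruct (IH1 (normal_form_appl _ _ Hn))
      as [[[x ->]|[[s ->]|[s [u ->]]]]|Hhead]; simpl; eauto.
    + exfalso; apply (Hn _ (ds_top _ _ (ts_beta s t2))).
    + exfalso; apply (Hn _ (ds_top _ _ (ts_app_pair s u t2))).
  - left; eauto.
  - right.
    destruct (IH (normal_form_pi1 _ Hn))
      as [[[x ->]|[[s ->]|[s [u ->]]]]|Hhead]; simpl; eauto.
    + exfalso; apply (Hn _ (ds_top _ _ (ts_pi1_lam s))).
    + exfalso; apply (Hn _ (ds_top _ _ (ts_pi1 s u))).
  - right.
    destruct (IH (normal_form_pi2 _ Hn))
      as [[[x ->]|[[s ->]|[s [u ->]]]]|Hhead]; simpl; eauto.
    + exfalso; apply (Hn _ (ds_top _ _ (ts_pi2_lam s))).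
    + exfalso; apply (Hn _ (ds_top _ _ (ts_pi2 s u))).
Qed.

Theorem proposition1 (t : term) :
  closed t -> normal_form t -> is_value t.
Proof.
  intros Hc Hn.
  destruct (normal_form_value_or_head_var t Hn) as [Hv|[n Hhead]]; [exact Hv|].
  exfalso.
  pose proof (closed_at_head 0 t Hc) as Hc_head.
  rewrite Hhead in Hc_head; simpl in Hc_head; lia.
Qed.
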